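(* Let $N\ge1$, $\eta_S,\eta_{FS}\in\mathbb{R}$ and $q\in(0,1)$. For $\eta_F\in\mathbb{R}$, let $(X_1,\dots,X_N)\in\{0,1\}^N$ have distribution $$\Pr(X_1=x_1,\dots,X_N=x_N)=\frac{1}{Z_1}\Big(e^{\eta_F\sum_ix_i}+e^{\eta_S+(\eta_{FS}+\eta_F)\sum_ix_i}\Big),\qquad Z_1=(1+e^{\eta_F})^N+e^{\eta_S}(1+e^{\eta_F+\eta_{FS}})^N.$$ Define $g(y)=\big(1-\frac{1-q}{q}y\big)(1+y)^{N-1}$. Then a value $\eta_F^*\in\mathbb{R}$ gives $\Pr(X_1=1)=q$ if and only if $$g\big(e^{\eta_F^*}\big)+e^{\eta_S}\,g\big(e^{\eta_{FS}}e^{\eta_F^*}\big)=0.$$ *)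

From HB Require Import structures.
From mathcomp Require Import all_boot all_order all_algebra.
From mathcomp Require Import all_classical all_reals all_analysis.
Set Implicit Arguments. Unset Strict Implicit. Unset Printing Implicit Defensive.
Import Order.TTheory GRing.Theory Num.Theory.
Local Open Scope ring_scope.

Definition nones (N : nat) (R : realType) (x : {ffun 'I_N -> bool}) : R :=
  \sum_(i < N) (x i)%:R.

Definition weight (R : realType) (N : nat) (etaS etaFS etaF : R)
  (x : {ffun 'I_N -> bool}) : R :=
  expR (etaF * nones R x) + expR (etaS + (etaFS + etaF) * nones R x).

Definition Z1 (R : realType) (N : nat) (etaS etaFS etaF : R) : R :=
  (1 + expR etaF) ^+ N + expR etaS * (1 + expR (etaF + etaFS)) ^+ N.

Definition prob (R : realType) (N : nat) (etaS etaFS etaF : R)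
  (x : {ffun 'I_N -> bool}) : R :=
  weight etaS etaFS etaF x / Z1 N etaS etaFS etaF.

(* Pr(X_1 = 1); the first coordinate is the index 0 (needs 1 <= N) *)
Definition probX1 (R : realType) (N : nat) (hN : (0 < N)%N) (etaS etaFS etaF : R) : R :=
  \sum_(x : {ffun 'I_N -> bool} | x (Ordinal hN)) prob etaS etaFS etaF x.

Definition g (R : realType) (N : nat) (q y : R) : R :=
  (1 - (1 - q) / q * y) * (1 + y) ^+ N.-1.

(* Both weights are products over the coordinates, so summing over the
   configurations with X_1 = 1 gives
   Pr(X_1 = 1) = (y(1+y)^(N-1) + e^etaS w(1+w)^(N-1)) / Z_1
   with y = e^etaF and w = e^(etaF + etaFS).  As q g(y) = q(1+y)^N - y(1+y)^(N-1),
   q (g(y) + e^etaS g(w)) = q Z_1 - (numerator), which vanishes exactly when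
   Pr(X_1 = 1) = q. *)
From mathcomp Require Import all_boot all_order all_algebra.
From mathcomp Require Import all_classical all_reals all_analysis.
From mathcomp Require Import ring.
Import Order.TTheory GRing.Theory Num.Theory.
Local Open Scope ring_scope.

Lemma expR_mul_nones (R : realType) (N : nat) (a : R) (x : {ffun 'I_N -> bool}) :
  expR (a * nones R x) = \prod_(i < N) (if x i then expR a else 1).
Proof.
rewrite /nones mulr_sumr (big_morph expR (@expRD R) (expR0 R)).
by apply: eq_bigr => i _; case: (x i); rewrite ?mulr1 ?mulr0 ?expR0.
Qed.

Lemma sum_prod_if_fixed_true (R : comPzSemiRingType) (N : nat) (i0 : 'I_N) (e : R) :
  \sum_(x : {ffun 'I_N -> bool} | x i0) \prod_(i < N) (if x i then e else 1)
  = e * (1 + e) ^+ N.-1.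
Proof.
pose Q (i : 'I_N) (b : bool) := (i == i0) ==> b.
have inQ (x : {ffun 'I_N -> bool}) : (x \in family Q) = x i0.
  apply/familyP/idP => [/(_ i0)|x_i0 i]; first by rewrite /Q eqxx.
  by rewrite unfold_in /Q; case: eqP => // ->.
rewrite (eq_bigl (mem (family Q))); last by move=> x; rewrite /= inQ.
rewrite -(@bigA_distr_big_dep R 0 1 *%R +%R _ _ Q (fun _ b => if b then e else 1)).
rewrite (bigD1 i0) //=.
rewrite {1}/Q eqxx (big_pred1 true) => [|[]//]; congr (_ * _).
rewrite (eq_bigr (fun _ => 1 + e)) => [|i /negbTE i_ne]; last first.
  by rewrite /Q i_ne big_bool addrC.
by rewrite prodr_const cardC1 card_ord.
Qed.

Lemma probX1E (R : realType) (N : nat) (hN : (0 < N)%N) (etaS etaFS etaF : R) :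
  let y := expR etaF in let w := expR (etaF + etaFS) in
  probX1 hN etaS etaFS etaF
  = (y * (1 + y) ^+ N.-1 + expR etaS * (w * (1 + w) ^+ N.-1))
    / Z1 N etaS etaFS etaF.
Proof.
rewrite /= /probX1 /prob -mulr_suml /weight big_split /=; congr ((_ + _) / _).
  by under eq_bigr do rewrite expR_mul_nones; rewrite sum_prod_if_fixed_true.
under eq_bigr do rewrite expRD expR_mul_nones.
by rewrite -mulr_sumr sum_prod_if_fixed_true addrC.
Qed.

Lemma mul_g (R : realType) (N : nat) (q y : R) : (0 < N)%N -> q != 0 ->
  q * g N q y = q * (1 + y) ^+ N - y * (1 + y) ^+ N.-1.
Proof.
by case: N => // n _ q_neq0; rewrite /g /= exprSr; field.
Qed.

Theorem proposition5 (R : realType) (N : nat) (hN : (0 < N)%N)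
  (etaS etaFS q : R) (hq0 : 0 < q) (hq1 : q < 1) (etaFstar : R) :
  probX1 hN etaS etaFS etaFstar = q <->
  g N q (expR etaFstar) + expR etaS * g N q (expR etaFS * expR etaFstar) = 0.
Proof.
rewrite probX1E /Z1 ![etaFstar + _]addrC -expRD.
set y := expR etaFstar; set w := expR (etaFS + etaFstar); set s := expR etaS.
set num := y * _ + s * _.
set Z := (1 + y) ^+ N + _.
have q_neq0 : q != 0 by rewrite gt_eqF.
have Z_neq0 : Z != 0.
  by rewrite gt_eqF // addr_gt0 ?mulr_gt0 ?exprn_gt0 ?addr_gt0 ?expR_gt0.
have q_mul_eqn : q * (g N q y + s * g N q w) = q * Z - num.
  by rewrite mulrDr (mulrCA q s) !mul_g // /Z /num; ring.
split => [prob_eq | g_eq].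
  by apply: (mulfI q_neq0); rewrite mulr0 q_mul_eqn -prob_eq divfK ?subrr.
move: q_mul_eqn; rewrite g_eq mulr0 => /esym/eqP; rewrite subr_eq0 => /eqP <-.
by rewrite mulfK.
Qed.
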